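(* Let $K\ge2$, $p_1,\dots,p_K\in[0,1]$, $\alpha\in[0,1]$, and let $F:\bigcup_{n\ge1}[0,1]^n\to[0,1]$ be a symmetric function. All sets $I,J$ below are nonempty subsets of $\{1,\dots,K\}$. Let \[ \mathcal U:=\{I: F(p_i:i\in I)\le\alpha\},\qquad \mathcal X:=\{I:\ J\in\mathcal U\text{ for all }J\supseteq I\}, \] and for nonempty $R\subseteq\{1,\dots,K\}$ let $t_\alpha(R):=\max\{|I|: I\subseteq R,\ I\notin\mathcal X\}$ (with $\max\emptyset:=0$) and $f_\alpha(R):=|R|-t_\alpha(R)$. Define \[ D_p^R(j):=\max_{J:\ |R\setminus J|<j}F(p_i:i\in J). \] Then for every nonempty $R$ and every $j\in\{1,\dots,|R|\}$, \[ f_\alpha(R)\ge j\iff D_p^R(j)\le\alpha . \]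
   Context: Symmetric means the value of $F$ does not depend on the order of its arguments. (In the paper $F$ is a symmetric \textit{p}-merging function, but the equivalence uses only the stated definitions.) *)

From HB Require Import structures.
From mathcomp Require Import all_boot all_order all_algebra.
Set Implicit Arguments. Unset Strict Implicit. Unset Printing Implicit Defensive.
Import Order.TTheory GRing.Theory Num.Theory.
Local Open Scope ring_scope.

Section Defs.
Variables (R : realFieldType) (K : nat).

Definition symmetricF (F : seq R -> R) : Prop :=
  forall s t : seq R, perm_eq s t -> F s = F t.

Definition Fsub (F : seq R -> R) (p : 'I_K -> R) (I : {set 'I_K}) : R :=
  F [seq p i | i <- enum I].

Definition inU F p (alpha : R) (I : {set 'I_K}) : bool :=
  (I != set0) && (Fsub F p I <= alpha).

Definition inX F p (alpha : R) (I : {set 'I_K}) : bool :=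
  (I != set0) && [forall J : {set 'I_K}, (I \subset J) ==> inU F p alpha J].

Definition t_alpha F p (alpha : R) (Rs : {set 'I_K}) : nat :=
  (\max_(I : {set 'I_K} | [&& I \subset Rs, I != set0 & ~~ inX F p alpha I]) #|I|)%N.

Definition f_alpha F p (alpha : R) (Rs : {set 'I_K}) : nat :=
  (#|Rs| - t_alpha F p alpha Rs)%N.

(* The index set is nonempty (J = full set), and F takes values in [0,1],
   so the default value 0 of the iterated max is harmless. *)
Definition D_p F p (Rs : {set 'I_K}) (j : nat) : R :=
  \big[Num.max/0]_(J : {set 'I_K} | (J != set0) && (#|Rs :\: J| < j)%N) Fsub F p J.

End Defs.

From HB Require Import structures.
From mathcomp Require Import all_boot all_order all_algebra.
From mathcomp Require Import zify.
Set Implicit Arguments. Unset Strict Implicit. Unset Printing Implicit Defensive.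
Import Order.TTheory GRing.Theory Num.Theory.
Local Open Scope ring_scope.

(* A subset I is outside X exactly when some superset J of I has F(p_J) > alpha,
   so t_alpha(R) is the largest trace |R ∩ J| of such a "rejecting" set J.
   Since |R ∩ J| + |R \ J| = |R|, the bound t_alpha(R) <= |R| - j says that every
   J with |R \ J| < j is accepted, which is the statement D_p^R(j) <= alpha. *)

Section ClosedTesting.
Variables (R : realFieldType) (K : nat) (F : seq R -> R) (p : 'I_K -> R) (alpha : R).

Lemma notinXP (I : {set 'I_K}) : I != set0 ->
  reflect (exists2 J : {set 'I_K}, I \subset J & alpha < Fsub F p J) (~~ inX F p alpha I).
Proof.
move=> I0; rewrite /inX I0 negb_forall.
apply: (iffP existsP) => [[J]|[J IJ FJ]] /=.
- rewrite negb_imply /inU negb_and negbK -ltNge => /andP[IJ /orP[/eqP J0|FJ]].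
    by move: IJ I0; rewrite J0 subset0 => ->.
  by exists J.
- by exists J; rewrite negb_imply IJ /inU negb_and -ltNge FJ orbT.
Qed.

Lemma t_alpha_leqP (Rs : {set 'I_K}) (n : nat) :
  reflect (forall J : {set 'I_K}, alpha < Fsub F p J -> (#|Rs :&: J| <= n)%N)
          (t_alpha F p alpha Rs <= n)%N.
Proof.
rewrite /t_alpha; apply: (iffP (bigmax_leqP _ _ _)) => [Ht J FJ | HJ I].
- have [->|RJ0] := eqVneq (Rs :&: J) set0; first by rewrite cards0.
  apply: Ht; rewrite subsetIl RJ0 /=.
  by apply/notinXP => //; exists J; rewrite ?subsetIr.
- case/and3P=> IRs I0 /(notinXP I0)[J IJ FJ].
  apply: leq_trans (HJ J FJ); apply: subset_leq_card.
  by rewrite subsetI IRs IJ.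
Qed.

Lemma D_p_leP (Rs : {set 'I_K}) (j : nat) : 0 <= alpha ->
  reflect (forall J : {set 'I_K}, J != set0 -> (#|Rs :\: J| < j)%N -> Fsub F p J <= alpha)
          (D_p F p Rs j <= alpha).
Proof.
move=> alpha_ge0; rewrite /D_p.
apply: (iffP (bigmax_leP _ _ _ _)) => [[_ HD] J J0 RJ | HD].
- by apply: HD; rewrite J0.
- by split=> // J /andP[J0 RJ]; apply: HD.
Qed.

End ClosedTesting.

Arguments D_p_leP {R K F p alpha Rs j}.

Lemma leq_subr_cardsI (T : finType) (A B : {set T}) (j : nat) : (j <= #|A|)%N ->
  (#|A :&: B| <= #|A| - j)%N = (j <= #|A :\: B|)%N.
Proof. by move=> jA; have := cardsID B A; lia. Qed.

Theorem mainTheorem7 (R : realFieldType) (K : nat) (p : 'I_K -> R) (alpha : R)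
  (F : seq R -> R)
  (hK : (2 <= K)%N)
  (hp : forall i, 0 <= p i <= 1)
  (ha : 0 <= alpha <= 1)
  (hsym : symmetricF F)
  (hF : forall s : seq R, s != [::] -> all (fun x => 0 <= x <= 1) s -> 0 <= F s <= 1)
  (Rs : {set 'I_K}) (hR : Rs != set0)
  (j : nat) (hj1 : (1 <= j)%N) (hj2 : (j <= #|Rs|)%N) :
  (j <= f_alpha F p alpha Rs)%N <-> D_p F p Rs j <= alpha.
Proof.
case/andP: ha => alpha_ge0 _.
have -> : (j <= f_alpha F p alpha Rs)%N = (t_alpha F p alpha Rs <= #|Rs| - j)%N.
  by rewrite /f_alpha; apply/idP/idP; lia.
split=> [/t_alpha_leqP Ht | /(D_p_leP alpha_ge0) HD].
- apply/(D_p_leP alpha_ge0) => J _ RJ; rewrite leNgt; apply/negP => /Ht.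
  by rewrite leq_subr_cardsI // leqNgt RJ.
- apply/t_alpha_leqP => J FJ; rewrite leq_subr_cardsI // leqNgt.
  apply/negP => RJ; have J0 : J != set0.
    by apply: contraTneq RJ => ->; rewrite setD0 -leqNgt.
  by move: (HD J J0 RJ); rewrite leNgt FJ.
Qed.
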